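(* Let $G$ and $H$ be impartial games that are both $\mathcal{P}$-positions. Then the split sum $G \circ H$ is a $\mathcal{P}$-position.
   Context: All games are finite (short) impartial games under normal play (a player with no legal move loses). A game is identified with its set of options, written $\{g_1,\dots,g_k\}$; $\mathbf{E}$ denotes the game with no options. Two games are identical, $G\equiv H$, if they have the same set of options, recursively. A $\mathcal{P}$-position is a game whose options are all $\mathcal{N}$-positions (in particular $\mathbf{E}$ is a $\mathcal{P}$-position); an $\mathcal{N}$-position is a game having at least one option that is a $\mathcal{P}$-position. The split sum is defined recursively by: $G\circ H \equiv \mathbf{E}$ if $G\equiv \mathbf{E}$; $G\circ H\equiv G$ if $H\equiv\mathbf{E}$ (and $G\not\equiv\mathbf{E}$); otherwise $G\circ H \equiv \{G\circ h,\ g\circ H\}$ where $g$ ranges over the options of $G$ and $h$ over the options of $H$. *)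

From Stdlib Require Import List Bool.
Import ListNotations.

Inductive game : Type := Node : list game -> game.

Definition options (G : game) : list game := match G with Node gs => gs end.

Definition E : game := Node [].

Fixpoint isP (G : game) : bool :=
  match G with Node gs => forallb (fun g => negb (isP g)) gs end.

Definition isN (G : game) : bool := existsb isP (options G).

(* Split sum:  G o H = E if G = E;  = G if H = E (G <> E);
   otherwise {G o h, g o H}. *)
Fixpoint split (G : game) : game -> game :=
  match G with
  | Node gs =>
    fix splitG (H : game) : game :=
      match H with
      | Node hs =>
        match gs, hs with
        | [], _ => Node []
        | _, [] => Node gs
        | _, _ => Node (map splitG hs ++ map (fun g => split g H) gs)
        end
      end
  end.

From Stdlib Require Import List Bool Lia Wf_nat.
Import ListNotations.
(* Imported last so that [split] denotes the split sum, not [List.split]. *)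

(* We argue by induction on the total size of the pair (G, H),
   following the strategy-stealing ("copy the reply") argument of the paper.
   If G or H has no options, G o H is G itself, a P-position.  Otherwise every
   option of G o H is G o h (h an option of H) or g o H (g an option of G).
   Since H is a P-position, h is an N-position, so h has a P-option h'; and
   G o h' is an option of G o h, which is a P-position by induction.  Hence
   G o h is an N-position; symmetrically so is g o H.  So every option of
   G o H is an N-position, i.e. G o H is a P-position. *)

Fixpoint size (G : game) : nat :=
  match G with Node gs => S (list_sum (map size gs)) end.

Lemma size_option (g G : game) : In g (options G) -> size g < size G.
Proof.
  destruct G as [gs]; simpl.
  induction gs as [|g0 gs IH]; simpl; [tauto|].
  intros [<-|Hin]; [lia|].
  specialize (IH Hin); lia.
Qed.

Lemma pair_size_ind (P : game -> game -> Prop) :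
  (forall G H, (forall g h, size g + size h < size G + size H -> P g h) -> P G H) ->
  forall G H, P G H.
Proof.
  intros step G H.
  set (measure := fun p : game * game => size (fst p) + size (snd p)).
  change (P (fst (G, H)) (snd (G, H))).
  induction (G, H) as [[G' H'] IH] using (well_founded_ind (well_founded_ltof _ measure)).
  apply step; intros g h Hlt.
  exact (IH (g, h) Hlt).
Qed.

Lemma isP_spec (G : game) :
  isP G = true <-> forall g, In g (options G) -> isP g = false.
Proof.
  destruct G as [gs]; simpl.
  rewrite forallb_forall.
  split; intros Hall g Hg; specialize (Hall g Hg); now destruct (isP g).
Qed.

Lemma isP_false_spec (G : game) :
  isP G = false <-> exists g, In g (options G) /\ isP g = true.
Proof.
  rewrite <- not_true_iff_false, isP_spec.
  split.
  - intros Hnot.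
    destruct (existsb isP (options G)) eqn:Hex.
    + now apply existsb_exists in Hex.
    + exfalso; apply Hnot; intros g Hg.
      apply not_true_iff_false; intros HgP.
      apply not_true_iff_false in Hex; apply Hex.
      apply existsb_exists; eauto.
  - intros [g [Hg HgP]] Hall.
    now rewrite (Hall g Hg) in HgP.
Qed.

Lemma P_option_reply (G g : game) :
  isP G = true -> In g (options G) -> exists g', In g' (options g) /\ isP g' = true.
Proof.
  intros HG Hg.
  apply isP_false_spec, (proj1 (isP_spec G) HG), Hg.
Qed.

Lemma split_no_left_options (G H : game) : options G = [] -> split G H = G.
Proof. destruct G as [gs], H as [hs]; simpl; intros ->; reflexivity. Qed.

Lemma split_no_right_options (G H : game) : options H = [] -> split G H = G.
Proof. destruct G as [[|g gs]], H as [hs]; simpl; intros ->; reflexivity. Qed.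

Lemma split_options (G H : game) :
  options G <> [] -> options H <> [] ->
  options (split G H) = map (split G) (options H) ++ map (fun g => split g H) (options G).
Proof.
  destruct G as [[|g gs]], H as [[|h hs]]; simpl; congruence.
Qed.

Lemma split_option_right (G h h' : game) :
  options G <> [] -> In h' (options h) -> In (split G h') (options (split G h)).
Proof.
  intros HG Hh'.
  assert (Hh : options h <> []) by (intros E0; rewrite E0 in Hh'; destruct Hh').
  rewrite split_options by assumption.
  apply in_or_app; left; now apply in_map.
Qed.

Lemma split_option_left (g g' H : game) :
  options H <> [] -> In g' (options g) -> In (split g' H) (options (split g H)).
Proof.
  intros HH Hg'.
  assert (Hg : options g <> []) by (intros E0; rewrite E0 in Hg'; destruct Hg').
  rewrite split_options by assumption.
  apply in_or_app; right; now apply (in_map (fun x => split x H)).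
Qed.

Theorem theorem2p2 (G H : game) :
  isP G = true -> isP H = true -> isP (split G H) = true.
Proof.
  revert G H.
  apply (pair_size_ind (fun G H => isP G = true -> isP H = true -> isP (split G H) = true)).
  intros G H IH HG HH.
  destruct (options G) as [|g0 gs] eqn:HoG; [now rewrite split_no_left_options|].
  destruct (options H) as [|h0 hs] eqn:HoH; [now rewrite split_no_right_options|].
  assert (HG' : options G <> []) by now rewrite HoG.
  assert (HH' : options H <> []) by now rewrite HoH.
  apply isP_spec; rewrite split_options by assumption.
  intros x Hx; apply in_app_or in Hx as [Hx|Hx]; apply in_map_iff in Hx as [y [<- Hy]].
  - (* answer G o y with G o y', where y' is a P-option of y *)
    destruct (P_option_reply H y HH Hy) as [y' [Hy' Hy'P]].
    pose proof (size_option _ _ Hy); pose proof (size_option _ _ Hy').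
    apply isP_false_spec; exists (split G y'); split; [now apply split_option_right|].
    apply IH; [lia | exact HG | exact Hy'P].
  - (* answer y o H with y' o H, where y' is a P-option of y *)
    destruct (P_option_reply G y HG Hy) as [y' [Hy' Hy'P]].
    pose proof (size_option _ _ Hy); pose proof (size_option _ _ Hy').
    apply isP_false_spec; exists (split y' H); split; [now apply split_option_left|].
    apply IH; [lia | exact Hy'P | exact HH].
Qed.
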